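(* Let $M$ be a regular $po$-$\Gamma$-semigroup. Then for every fuzzy right ideal $f$ of $M$ and every fuzzy subset $g$ of $M$, we have $f\wedge g\preceq f\circ g$.
   Context: Let $M$ and $\Gamma$ be nonempty sets with a map $M\times\Gamma\times M\to M$, $(a,\gamma,b)\mapsto a\gamma b$, satisfying $(a\gamma b)\mu c=a\gamma(b\mu c)$ for all $a,b,c\in M$, $\gamma,\mu\in\Gamma$. A $po$-$\Gamma$-semigroup is such an $M$ with a partial order $\le$ such that $a\le b$ implies $a\gamma c\le b\gamma c$ and $c\gamma a\le c\gamma b$ for all $c\in M$, $\gamma\in\Gamma$. For $H\subseteq M$, $(H]=\{t\in M: t\le h \text{ for some } h\in H\}$; for subsets $A,B,C$, $A\Gamma B\Gamma C=\{a\gamma b\mu c: a\in A,b\in B,c\in C,\gamma,\mu\in\Gamma\}$ (elements are identified with singletons). $M$ is regular if $a\in(a\Gamma M\Gamma a]$ for every $a\in M$. A fuzzy subset of $M$ is a map $M\to[0,1]$. For $a\in M$ let $A_a=\{(y,z)\in M\times M: a\le y\gamma z \text{ for some }\gamma\in\Gamma\}$. $(f\circ g)(a)=\bigvee_{(y,z)\in A_a}\min\{f(y),g(z)\}$ if $A_a\ne\emptyset$, and $0$ otherwise. $(f\wedge g)(a)=\min\{f(a),g(a)\}$; $f\preceq g$ means $f(a)\le g(a)$ for all $a$. A fuzzy right ideal is a fuzzy subset $f$ with $f(x\gamma y)\ge f(x)$ for all $x,y\in M,\gamma\in\Gamma$, and $x\le y\Rightarrow f(x)\ge f(y)$. *)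

From Stdlib Require Import Reals Classical ClassicalEpsilon.
From Coquelicot Require Import Coquelicot.
Open Scope R_scope.

Record po_Gamma_semigroup (M G : Type) := {
  op : M -> G -> M -> M;
  le : M -> M -> Prop;
  M_inh : inhabited M;
  G_inh : inhabited G;
  op_assoc : forall a b c g m, op (op a g b) m c = op a g (op b m c);
  le_refl : forall a, le a a;
  le_antisym : forall a b, le a b -> le b a -> a = b;
  le_trans : forall a b c, le a b -> le b c -> le a c;
  le_compat_r : forall a b c g, le a b -> le (op a g c) (op b g c);
  le_compat_l : forall a b c g, le a b -> le (op c g a) (op c g b)
}.
Arguments op {M G}.
Arguments le {M G}.

(* a in (a Gamma M Gamma a] *)
Definition regular {M G} (S : po_Gamma_semigroup M G) : Prop :=
  forall a, exists (x : M) (g m : G), le S a (op S (op S a g x) m a).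

Definition fuzzy_subset {M} (f : M -> R) : Prop := forall x, 0 <= f x <= 1.

Definition A_set {M G} (S : po_Gamma_semigroup M G) (a : M) (p : M * M) : Prop :=
  exists g, le S a (op S (fst p) g (snd p)).

Definition comp_vals {M G} (S : po_Gamma_semigroup M G) (f g : M -> R) (a : M)
  (r : R) : Prop :=
  exists y z, A_set S a (y, z) /\ r = Rmin (f y) (g z).

Definition fcomp {M G} (S : po_Gamma_semigroup M G) (f g : M -> R) (a : M) : R :=
  match excluded_middle_informative (exists p, A_set S a p) with
  | left _ => real (Lub_Rbar (comp_vals S f g a))
  | right _ => 0
  end.

Definition fmeet {M} (f g : M -> R) (a : M) : R := Rmin (f a) (g a).

Definition fle {M} (f g : M -> R) : Prop := forall a, f a <= g a.

Definition fuzzy_right_ideal {M G} (S : po_Gamma_semigroup M G) (f : M -> R) : Prop :=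
  fuzzy_subset f /\
  (forall x y (g : G), f (op S x g y) >= f x) /\
  (forall x y, le S x y -> f x >= f y).

(* By regularity a <= (a γ x) μ a, so (a γ x, a) lies in A_a; since f is a right
   ideal, f (a γ x) >= f a, hence min (f a, g a) <= min (f (a γ x), g a), which is
   one of the values whose supremum defines (f ∘ g)(a). *)
From Stdlib Require Import Reals ClassicalEpsilon.
From Coquelicot Require Import Coquelicot.

Section Composition.

Variables (M G : Type) (S : po_Gamma_semigroup M G).

Lemma comp_vals_le_1 (f g : M -> R) (a : M) (r : R) :
  fuzzy_subset f -> comp_vals S f g a r -> r <= 1.
Proof.
  intros Hf [y [z [_ ->]]].
  destruct (Hf y) as [_ Hy1].
  eapply Rle_trans; [apply Rmin_l | exact Hy1].
Qed.

(* Boundedness by 1 is what makes the supremum finite, so that [real] does not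
   collapse it to the junk value 0. *)
Lemma comp_vals_le_fcomp (f g : M -> R) (a : M) (r : R) :
  fuzzy_subset f -> comp_vals S f g a r -> r <= fcomp S f g a.
Proof.
  intros Hf Hr.
  unfold fcomp.
  destruct (excluded_middle_informative (exists p, A_set S a p)) as [_ | Hnone].
  2: { exfalso; apply Hnone; destruct Hr as [y [z [HA _]]]; eauto. }
  destruct (Lub_Rbar_correct (comp_vals S f g a)) as [Hub Hlub].
  assert (Hle1 : Rbar_le (Lub_Rbar (comp_vals S f g a)) 1).
  { apply Hlub; intros s Hs; exact (comp_vals_le_1 f g a s Hf Hs). }
  specialize (Hub r Hr).
  destruct (Lub_Rbar (comp_vals S f g a)); simpl in *; easy.
Qed.

Lemma regular_A_set (a : M) :
  regular S -> exists (x : M) (ga : G), A_set S a (op S a ga x, a).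
Proof.
  intros Hreg; destruct (Hreg a) as [x [ga [m Ha]]].
  now exists x, ga, m.
Qed.

End Composition.

Theorem lemma8 (M G : Type) (S : po_Gamma_semigroup M G) :
  regular S ->
  forall f g : M -> R,
    fuzzy_right_ideal S f -> fuzzy_subset g ->
    fle (fmeet f g) (fcomp S f g).
Proof.
  intros Hreg f g [Hf [Hright _]] _ a.
  destruct (regular_A_set M G S a Hreg) as [x [ga HA]].
  assert (Hval : comp_vals S f g a (Rmin (f (op S a ga x)) (g a))).
  { now exists (op S a ga x), a. }
  eapply Rle_trans; [| exact (comp_vals_le_fcomp M G S f g a _ Hf Hval)].
  apply Rle_min_compat_r, Rge_le, Hright.
Qed.
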